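(* For integers $a,b\ge0$ let $c_{a,b}=c_{a,b}^{a+b+1}$. Then (1) $c_{a,b}\in\mathbb Z[\tfrac12]$; (2) $c_{a,b}-c_{b,a}\in2\mathbb Z$; (3) $\nu_2(c_{a+b,0})=\nu_2(c_{0,a+b})\le\nu_2(c_{a,b})\le0$.
   Context: For integers $a,b,r\ge0$, $c_{a,b}^r=2(-1)^r\Big(\binom{2r}{2b+2}-(1-2^{-2r})\binom{2r}{2a+1}\Big)$ (binomial coefficients $\binom nk=0$ if $k>n$). $\nu_2$ is the $2$-adic valuation on $\mathbb Q$, with $\nu_2(0)=\infty$. *)

From mathcomp Require Import all_boot all_order all_algebra.
Set Implicit Arguments. Unset Strict Implicit. Unset Printing Implicit Defensive.
Import Order.TTheory GRing.Theory Num.Theory.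
Local Open Scope ring_scope.

Definition cr (a b r : nat) : rat :=
  2 * (-1) ^+ r * ('C(2 * r, 2 * b + 2)%:R
                   - (1 - ((2 : rat) ^+ (2 * r))^-1) * 'C(2 * r, 2 * a + 1)%:R).

Definition c (a b : nat) : rat := cr a b (a + b + 1).

Definition in_Zhalf (q : rat) : Prop :=
  exists (z : int) (k : nat), q = z%:~R / (2 : rat) ^+ k.

Definition in_2Z (q : rat) : Prop := exists z : int, q = (2 * z)%:~R.

(* 2-adic valuation on Q; None stands for +infinity (value at 0) *)
Definition nu2 (q : rat) : option int :=
  if q == 0 then None
  else Some ((logn 2 `|numq q|)%:Z - (logn 2 `|denq q|)%:Z).

Definition le_ext (x y : option int) : bool :=
  match x, y with
  | _, None => true
  | None, Some _ => false
  | Some m, Some n => (m <= n)%R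
  end.

From mathcomp Require Import all_boot all_order all_algebra zify ring.
Import Order.TTheory GRing.Theory Num.Theory.
Local Open Scope ring_scope.

(* Write ['C(2r, 2a+1) = w 2^v] with [w] odd; as ['C(2r, k) < 2^(2r)] for
   [k > 0], [v < 2r].  Then
   [c^r_{a,b} = (-1)^r (2 ('C(2r, 2b+2) - 'C(2r, 2a+1)) + w / 2^(2r-1-v))]
   is an odd integer over [2^(2r-1-v)], so it lies in Z[1/2] with valuation
   [v - (2r-1) <= 0].  For [r = a+b+1] the symmetry
   ['C(2r, 2b+1) = 'C(2r, 2a+1)] makes the fractional parts of [c_{a,b}] and
   [c_{b,a}] cancel, and the valuation is smallest when [v] is, i.e. for
   [a = 0] or [b = 0]: the identity [2r 'C(2r-1, 2a) = (2a+1) 'C(2r, 2a+1)]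
   shows that [2r] divides ['C(2r, 2a+1)] up to an odd factor. *)

Lemma bin_lt_exp2 (n k : nat) : (0 < k)%N -> ('C(n, k) < 2 ^ n)%N.
Proof.
elim: n k => [|n IHn] [|[|k]] // _.
- by rewrite bin1 expnS; have := IHn 1%N isT; rewrite bin1; lia.
- by rewrite binS expnS; have := IHn k.+2 isT; have := IHn k.+1 isT; lia.
Qed.

Lemma logn_le_logn_bin (p n k : nat) :
  prime p -> (0 < k <= n)%N -> coprime p k -> (logn p n <= logn p 'C(n, k))%N.
Proof.
move=> p_pr /andP[k_gt0 le_kn] co_pk.
have n_gt0 : (0 < n)%N by apply: leq_trans le_kn.
rewrite -pfactor_dvdn ?bin_gt0 //.
have n_dvd : (n %| k * 'C(n, k))%N.
  by rewrite -(prednK k_gt0) -mul_bin_diag dvdn_mulr.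
rewrite -(@Gauss_dvdr _ k); first exact: dvdn_trans (pfactor_dvdnn p n) n_dvd.
by rewrite coprimeXl.
Qed.

Lemma bin_odd_sym (a b : nat) :
  'C(2 * (a + b + 1), 2 * b + 1) = 'C(2 * (a + b + 1), 2 * a + 1).
Proof.
rewrite -[in RHS]bin_sub; last lia.
by congr 'C(_, _); lia.
Qed.

Lemma nu2_odd_div_exp2 (o : int) (k : nat) :
  odd `|o| -> nu2 (o%:~R / 2 ^+ k) = Some (- k%:Z).
Proof.
move=> o_odd.
have o_neq0 : o != 0 by apply: contraTneq o_odd => ->.
have pow2E : (2 : rat) ^+ k = (2 ^ k)%N%:Z%:~R by rewrite -pmulrn natrX.
have co : coprime `|o| `|(2 ^ k)%N%:Z|.
  by rewrite absz_nat coprime_sym coprimeXl ?coprime2n.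
rewrite /nu2 pow2E coprimeq_num // coprimeq_den //.
rewrite mulf_eq0 invr_eq0 !intr_eq0 (negbTE o_neq0) eqz_nat expn_eq0 /=.
rewrite gtr0_sg ?ltz_nat ?expn_gt0 // mul1r pfactorK //.
by rewrite logn_coprime ?sub0r // coprime2n.
Qed.

(* [2r-1-v] in the notation above: minus the valuation of [cr a b r]. *)
Definition cr_exp (a r : nat) : nat :=
  ((2 * r).-1 - logn 2 'C(2 * r, 2 * a + 1))%N.

Lemma cr_odd_repr (a b r : nat) : (a < r)%N ->
  exists2 o : int, odd `|o| & cr a b r = o%:~R / 2 ^+ cr_exp a r.
Proof.
move=> lt_ar.
set m := 'C(2 * r, 2 * a + 1); set v := logn 2 m; set k := cr_exp a r.
have m_gt0 : (0 < m)%N by rewrite bin_gt0; lia.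
have [w w_odd mE] := pfactor_coprime (isT : prime 2) m_gt0.
rewrite coprime2n -/v in w_odd mE.
have lt_v2r : (v < 2 * r)%N.
  rewrite -(@ltn_exp2l 2) //; apply: (@leq_ltn_trans m); last first.
    by apply: bin_lt_exp2; rewrite addn1.
  by rewrite [leqRHS]mE leq_pmull // lt0n; apply: contraTneq w_odd => ->.
have rE : (2 * r = k.+1 + v)%N by rewrite /k /cr_exp -/m -/v; lia.
exists ((-1) ^+ r * (2 * (2 ^+ k * ('C(2 * r, 2 * b + 2)%:Z - m%:Z)) + w%:Z)).
  rewrite abszMsign; move: (2 ^+ k * _) => e.
  have : (`|(2 * e + w%:Z)%R| %% 2 = 1)%N by have := modn2 w; rewrite w_odd; lia.
  by rewrite modn2; case: odd.
rewrite /cr -/m !(intrM, intrD, intrB, intrN) intr_sign rmorphXn /= -!pmulrn.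
rewrite mE !natrM !natrX rE exprD exprS.
field.
by rewrite !expf_neq0.
Qed.

Lemma cr_in_Zhalf (a b r : nat) : (a < r)%N -> in_Zhalf (cr a b r).
Proof. by move=> /(@cr_odd_repr a b r) [o _ ->]; exists o, (cr_exp a r). Qed.

Lemma nu2_cr (a b r : nat) :
  (a < r)%N -> nu2 (cr a b r) = Some (- (cr_exp a r)%:Z).
Proof. by move=> /(@cr_odd_repr a b r) [o o_odd ->]; rewrite nu2_odd_div_exp2. Qed.

Lemma c_sub_swap_in_2Z (a b : nat) : in_2Z (c a b - c b a).
Proof.
rewrite /c /cr [(b + a)%N]addnC bin_odd_sym.
set r := (a + b + 1)%N.
exists ((-1) ^+ r * ('C(2 * r, 2 * b + 2)%:Z - 'C(2 * r, 2 * a + 2)%:Z)).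
rewrite !(intrM, intrB) intr_sign -!pmulrn.
ring.
Qed.

Lemma cr_exp_sym (a b : nat) : cr_exp b (a + b + 1) = cr_exp a (a + b + 1).
Proof. by rewrite /cr_exp bin_odd_sym. Qed.

Lemma cr_exp_le (a r : nat) : (a < r)%N -> (cr_exp a r <= cr_exp 0 r)%N.
Proof.
move=> lt_ar.
have : (logn 2 (2 * r) <= logn 2 'C(2 * r, 2 * a + 1))%N.
  apply: logn_le_logn_bin => //; first by apply/andP; split; lia.
  by rewrite coprime2n addn1 /= oddM.
by rewrite /cr_exp muln0 add0n bin1; lia.
Qed.

Theorem mainTheorem9 (a b : nat) :
  in_Zhalf (c a b) /\
  in_2Z (c a b - c b a) /\
  (nu2 (c (a + b) 0) = nu2 (c 0 (a + b)) /\
   le_ext (nu2 (c 0 (a + b))) (nu2 (c a b)) /\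
   le_ext (nu2 (c a b)) (Some 0)).
Proof.
have lt_a : (a < a + b + 1)%N by lia.
have lt_ab : (a + b < a + b + 1)%N by lia.
have lt_0 : (0 < a + b + 1)%N by lia.
rewrite /c add0n addn0 !nu2_cr //.
split; first exact: cr_in_Zhalf.
split; first exact: c_sub_swap_in_2Z.
have := cr_exp_sym 0 (a + b); rewrite add0n => ->.
by rewrite /= lerN2 lez_nat oppr_le0 cr_exp_le.
Qed.
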